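(* Let $G$ be a finite simple graph. Then the total number of (nonempty) cliques of $G$ satisfies \[ \sum_{t\ge 1}N(G,K_t)\;\le\;\sum_{v\in V(G)}\sum_{t=1}^{d(v)+1}\frac{\binom{d(v)+1}{t}}{d(v)+1}\;=\;\sum_{v\in V(G)}\frac{2^{d(v)+1}-1}{d(v)+1}. \]
   Context: $N(G,K_t)$ denotes the number of subgraphs of $G$ isomorphic to the complete graph $K_t$. $d(v)$ is the degree of $v$ in $G$. *)

From mathcomp Require Import all_boot all_order all_algebra.
Set Implicit Arguments. Unset Strict Implicit. Unset Printing Implicit Defensive.
Import GRing.Theory Num.Theory.

Definition simple_graph (T : finType) (e : rel T) : Prop :=
  symmetric e /\ irreflexive e.

Definition is_clique (T : finType) (e : rel T) (S : {set T}) : bool :=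
  [forall x in S, forall y in S, (x != y) ==> e x y].

(* N(G, K_t): number of subgraphs isomorphic to K_t, i.e. t-element cliques. *)
Definition NK (T : finType) (e : rel T) (t : nat) : nat :=
  #|[set S : {set T} | is_clique e S & #|S| == t]|.

Definition deg (T : finType) (e : rel T) (v : T) : nat := #|[set w | e v w]|.

(* Every nonempty clique S receives total weight 1, split evenly as 1/|S| among its vertices.
   The cliques through a vertex v are v |: A with A a subset of the neighbourhood of v, so
   v receives at most sum_(A \subset N(v)) 1/(|A|+1) = sum_k C(d,k)/(k+1), d = d(v), and
   C(d,k)/(k+1) = C(d+1,k+1)/(d+1) turns this into (2^(d+1) - 1)/(d+1). *)
From mathcomp Require Import all_boot all_order all_algebra.
Import GRing.Theory Num.Theory.
Set Implicit Arguments.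
Unset Strict Implicit.
Unset Printing Implicit Defensive.

Local Open Scope ring_scope.

Lemma sum_binomial_pos (R : pzRingType) (n : nat) :
  \sum_(1 <= t < n.+1) ('C(n, t))%:R = (2 ^ n)%:R - 1 :> R.
Proof.
have sum_bin : (2 ^ n = \sum_(t < n.+1) 'C(n, t))%N.
  by rewrite -[2%N]/(1 + 1)%N expnDn; apply: eq_bigr => t _; rewrite !exp1n !muln1.
rewrite -(big_mkord xpredT (fun t => 'C(n, t))) big_ltn // bin0 in sum_bin.
by rewrite -natr_sum sum_bin natrD addrC addKr.
Qed.

Lemma bin_divSn (R : numFieldType) (d k : nat) :
  ('C(d, k))%:R / (k.+1)%:R = ('C(d.+1, k.+1))%:R / (d.+1)%:R :> R.
Proof.
apply/eqP; rewrite eqr_div ?pnatr_eq0 // -!natrM eqr_nat.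
by rewrite (mulnC 'C(d.+1, k.+1)) -mul_bin_diag mulnC.
Qed.

Lemma sum_subsets_inv_cardS (R : numFieldType) (T : finType) (B : {set T}) :
  \sum_(A : {set T} | A \subset B) (#|A|.+1)%:R^-1
  = \sum_(1 <= t < #|B|.+2) ('C(#|B|.+1, t))%:R / (#|B|.+1)%:R :> R.
Proof.
rewrite big_add1 /= big_mkord.
under [RHS]eq_bigr do rewrite -bin_divSn.
rewrite (partition_big (fun A : {set T} => (inord #|A| : 'I_#|B|.+1)) predT) //=.
apply: eq_bigr => k _.
transitivity (\sum_(A in [set A : {set T} | A \subset B & #|A| == k]) (k.+1)%:R^-1 : R).
  apply: eq_big => [A | A /andP[subAB /eqP <-]].
    rewrite inE; case: (boolP (A \subset B)) => //= subAB.
    by rewrite -(inj_eq val_inj) /= inordK // ltnS subset_leq_card.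
  by rewrite inordK // ltnS subset_leq_card.
by rewrite sumr_const cards_draws mulr_natl.
Qed.

Lemma clique_setU1_sub_neighbours (T : finType) (e : rel T) (v : T) (A : {set T}) :
  is_clique e (v |: A) -> v \notin A -> A \subset [set w | e v w].
Proof.
move=> /forall_inP/(_ v (setU11 v A))/forall_inP adj_v vNA.
apply/subsetP => a aA; rewrite inE.
have /implyP := adj_v a (setU1r v aA); apply.
by apply: contraNneq vNA => ->.
Qed.

Lemma sum_cliques_through_le (R : numFieldType) (T : finType) (e : rel T) (v : T) :
  \sum_(S : {set T} | is_clique e S && (v \in S)) #|S|%:R^-1
  <= \sum_(A : {set T} | A \subset [set w | e v w]) (#|A|.+1)%:R^-1 :> R.
Proof.
rewrite (reindex_onto (fun A => v |: A) (fun S => S :\ v)) /=; last first.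
  by move=> S /andP[_ vS]; rewrite setD1K.
rewrite big_mkcond [leRHS]big_mkcond /=; apply: ler_sum => A _.
rewrite setU11 andbT; case: (boolP (v \in A)) => [vA | vNA].
  have -> : ((v |: A) :\ v == A) = false.
    by apply/negbTE/eqP => eqA; move: vA; rewrite -eqA setD11.
  by rewrite andbF; case: ifP; rewrite ?invr_ge0.
rewrite setU1K // eqxx andbT cardsU1 vNA add1n.
case: (boolP (is_clique e (v |: A))) => [cliq | _].
  by rewrite (clique_setU1_sub_neighbours cliq vNA).
by case: ifP; rewrite ?invr_ge0.
Qed.

Lemma sum_NK_card (T : finType) (e : rel T) :
  (\sum_(1 <= t < #|T|.+1) NK e t = #|[set S : {set T} | is_clique e S & S != set0]|)%N.
Proof.
transitivity (\sum_(1 <= t < #|T|.+1) \sum_(S : {set T} | is_clique e S) (t == #|S|))%N.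
  apply: eq_bigr => t _; rewrite /NK -sum1_card big_mkcond [RHS]big_mkcond /=.
  by apply: eq_bigr => S _; rewrite inE eq_sym; case: is_clique; case: eqP.
rewrite exchange_big /= -[RHS]sum1_card big_mkcond [RHS]big_mkcond /=; apply: eq_bigr => S _.
rewrite inE; case: is_clique => //=.
by rewrite -(big_mkcond (fun i => i == #|S|)) big_nat1_eq ltnS max_card andbT card_gt0.
Qed.

Lemma card_nonempty_sum_inv_card (R : numFieldType) (T : finType) (P : pred {set T}) :
  #|[set S : {set T} | P S & S != set0]|%:R
  = \sum_(v : T) \sum_(S : {set T} | P S && (v \in S)) #|S|%:R^-1 :> R.
Proof.
rewrite (exchange_big_dep P) /=; last by move=> v S _ /andP[].
rewrite -sum1_card natr_sum big_mkcond [RHS]big_mkcond /=.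
apply: eq_bigr => S _; rewrite inE; case: (P S) => //=.
rewrite sumr_const -card_gt0; case: (posnP #|S|) => [-> | S_gt0]; first by rewrite mulr0n.
by rewrite -(mulr_natr #|S|%:R^-1) mulVf // pnatr_eq0 -lt0n.
Qed.

Theorem mainTheorem2 (T : finType) (e : rel T) :
  simple_graph e ->
  ((\sum_(1 <= t < #|T|.+1) (NK e t)%:R : rat)
     <= \sum_(v : T) \sum_(1 <= t < (deg e v).+2)
           ('C((deg e v).+1, t))%:R / ((deg e v).+1)%:R)
  /\
  (\sum_(v : T) \sum_(1 <= t < (deg e v).+2)
           ('C((deg e v).+1, t))%:R / ((deg e v).+1)%:R
   = \sum_(v : T) ((2 ^ (deg e v).+1)%:R - 1) / ((deg e v).+1)%:R :> rat).
Proof.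
move=> _; split; last first.
  by apply: eq_bigr => v _; rewrite -mulr_suml sum_binomial_pos.
rewrite -natr_sum sum_NK_card card_nonempty_sum_inv_card.
apply: ler_sum => v _; rewrite /deg -sum_subsets_inv_cardS.
exact: sum_cliques_through_le.
Qed.
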